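(* Let $A=(a_{ij})\in\mathcal{B}^{m,n}$ and let $k$ be a field. Let $k[A]=k[x_{ij} : a_{ij}=1]$, let $\Delta_A$ be the simplicial complex on vertex set $\{a_{ij}: a_{ij}=1\}$ whose faces are the isolated sets of $A$, let $I_{\Delta_A}\subseteq k[A]$ be its Stanley–Reisner ideal (generated by $\prod_{a_{ij}\in S}x_{ij}$ for all non-faces $S$), and let the isolation ideal be \[ J_A=I_{\Delta_A}+\left(x_{ij}^2 : a_{ij}=1\right)\subseteq k[A]. \] Let $S=k[A]/J_A$. Then \[ \operatorname{reg}(S)=\iota(A)=\dim(\Delta_A)+1\leq \operatorname{brank}(A). \]
   Context: $\mathcal{B}$ is the Boolean semiring $\{0,1\}$ with $\vee$ (or), $\wedge$ (and); the Boolean product of $V\in\mathcal{B}^{m,r}$, $H\in\mathcal{B}^{r,n}$ is $[V\wedge H]_{ij}=\bigvee_{\ell=1}^r V_{i\ell}\wedge H_{\ell j}$, and $\operatorname{brank}(A)=\min\{r : A=V\wedge H,\ V\in\mathcal{B}^{m,r},\ H\in\mathcal{B}^{r,n}\}$. A pair of entries $\{a_{ij},a_{k\ell}\}$ is isolated if $a_{ij}=a_{k\ell}=1$ and $a_{i\ell}\wedge a_{kj}=0$. A subset of entries equal to $1$ is an isolated set if it has size one or all its pairs are isolated. The isolation number $\iota(A)$ is the maximum size of an isolated set of $A$. $\operatorname{reg}$ is Castelnuovo–Mumford regularity over $k[A]$ with standard grading; $\dim(\Delta_A)$ is the maximum face cardinality minus one. *)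

From HB Require Import structures.
From mathcomp Require Import all_boot all_order all_algebra.
From mathcomp Require Import mpoly.
Set Implicit Arguments. Unset Strict Implicit. Unset Printing Implicit Defensive.
Import Order.TTheory GRing.Theory.
Local Open Scope ring_scope.

Section Bool.
Variables (m n : nat) (A : 'M[bool]_(m, n)).

Definition ones := { ij : 'I_m * 'I_n | A ij.1 ij.2 }.
HB.instance Definition _ := Finite.copy ones { ij : 'I_m * 'I_n | A ij.1 ij.2 }.

(* {a_ij, a_kl} is an isolated pair (both entries are 1 by construction) *)
Definition isolated_pair (p q : ones) : bool :=
  ~~ (A (val p).1 (val q).2 && A (val q).1 (val p).2).

Definition isolated_set (S : {set ones}) : bool :=
  (#|S| == 1)%N || [forall p in S, forall q in S, (p != q) ==> isolated_pair p q].

Definition isolation_number : nat := \max_(S : {set ones} | isolated_set S) #|S|.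

Definition face_Delta (S : {set ones}) : bool := isolated_set S.
Definition dim_Delta : int :=
  (\max_(S : {set ones} | face_Delta S) #|S|)%:Z - 1.
End Bool.

Definition bool_prod (m r n : nat) (V : 'M[bool]_(m, r)) (H : 'M[bool]_(r, n))
  : 'M[bool]_(m, n) := \matrix_(i, j) [exists l, V i l && H l j].

(* Boolean rank: least r with A = V /\ H (r = n always works, so the
   minimum over r <= n is the true minimum). *)
Definition brank (m n : nat) (A : 'M[bool]_(m, n)) : nat :=
  \big[minn/n]_(r < n.+1 | [exists V : 'M[bool]_(m, r),
                             [exists H : 'M[bool]_(r, n), bool_prod V H == A]]) r.

Section Ring.
Variables (k : fieldType) (m n : nat) (A : 'M[bool]_(m, n)).

Definition nvar := #|{: ones A}|.
Definition kA := {mpoly k[nvar]}.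
Definition xv (v : ones A) : kA := 'X_(enum_rank v).

Definition ideal_gen (N : nat) (G : {mpoly k[N]} -> Prop) (p : {mpoly k[N]}) : Prop :=
  exists s : seq ({mpoly k[N]} * {mpoly k[N]}),
    (forall c, c \in s -> G c.2) /\ p = \sum_(c <- s) c.1 * c.2.

Definition SR_gen (p : kA) : Prop :=
  exists S : {set ones A}, ~~ face_Delta S /\ p = \prod_(v in S) xv v.
Definition sq_gen (p : kA) : Prop := exists v : ones A, p = xv v ^+ 2.

Definition J_A (p : kA) : Prop := ideal_gen (fun g => SR_gen g \/ sq_gen g) p.

(* ---------------- Castelnuovo--Mumford regularity of S = k[A]/J_A -------
   Graded Betti numbers beta_{i,j}(S) = dim_k Tor_i^{k[A]}(S,k)_j, with Tor
   computed by the Koszul resolution of k: Tor_i(S,k) = H_i(x; S), the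
   homology of S (x) K(x_v). Chains of K(x; k[A]) are functions from subsets
   T of the variables (basis e_T, homological degree #|T|, internal degree
   #|T|) to k[A]; chains of S (x) K are taken modulo J_A. *)
Definition chain := {ffun {set 'I_nvar} -> kA}.

Definition kdiff (z : chain) : chain :=
  [ffun U : {set 'I_nvar} =>
     \sum_(t : 'I_nvar | t \notin U)
        (-1) ^+ #|[set u in U | (u < t)%N]| * 'X_t * z (t |: U)].

(* H_i(x; S)_{i+e} <> 0, i.e. beta_{i,i+e}(S) <> 0 *)
Definition betti_nz (i e : nat) : Prop :=
  exists z : chain,
    [/\ forall T : {set 'I_nvar}, #|T| = i -> z T \is e.-homog,
        forall T : {set 'I_nvar}, #|T| <> i -> z T = 0,
        forall U : {set 'I_nvar}, J_A (kdiff z U)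
      & ~ (exists w : chain, forall T : {set 'I_nvar}, #|T| = i -> J_A (z T - kdiff w T))].

(* reg(S) = max { j - i : beta_{i,j}(S) <> 0 } equals r  (here j - i = e) *)
Definition reg_S_eq (r : nat) : Prop :=
  (exists i, betti_nz i r) /\ (forall i e, betti_nz i e -> (e <= r)%N).
End Ring.

From HB Require Import structures.
From mathcomp Require Import all_boot all_order all_algebra.
From mathcomp Require Import mpoly.
Set Implicit Arguments.
Unset Strict Implicit.
Unset Printing Implicit Defensive.
Import GRing.Theory.
Local Open Scope ring_scope.

(* Every polynomial of degree > iota(A) lies in J_A: a monomial of that degree
   either has a square factor or its support is too large to be isolated.  So
   S = k[A]/J_A is Artinian with top degree at most iota(A), and no Koszul
   homology can live above internal degree i + iota(A).  Conversely, the
   squarefree monomial of an isolated set of size iota(A) survives in S and is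
   killed by every variable, so it spans a nonzero class of the top Koszul
   homology H_N(x; S) in degree N + iota(A).  For the Boolean rank: if
   A = V /\ H with inner dimension r, each entry 1 of A is covered by some
   rectangle l (V i l = H l j = 1), and two entries covered by the same
   rectangle are never isolated, so an isolated set has at most r elements. *)

Section IdealGen.
Variables (k : fieldType) (N : nat) (G : {mpoly k[N]} -> Prop).

Lemma ideal_gen0 : ideal_gen G 0.
Proof. by exists [::]; rewrite big_nil. Qed.

Lemma ideal_genD p q : ideal_gen G p -> ideal_gen G q -> ideal_gen G (p + q).
Proof.
move=> [s1 [G1 ->]] [s2 [G2 ->]]; exists (s1 ++ s2); rewrite big_cat; split=> //.
by move=> c; rewrite mem_cat => /orP [/G1|/G2].
Qed.

Lemma ideal_genMl r p : ideal_gen G p -> ideal_gen G (r * p).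
Proof.
move=> [s [Gs ->]]; exists [seq (r * c.1, c.2) | c <- s]; split.
  by move=> c /mapP [c' /Gs Gc' ->].
by rewrite big_map mulr_sumr; apply: eq_bigr => c _; rewrite mulrA.
Qed.

Lemma ideal_gen_sum (I : Type) (r : seq I) (P : pred I) (F : I -> {mpoly k[N]}) :
  (forall i, P i -> ideal_gen G (F i)) -> ideal_gen G (\sum_(i <- r | P i) F i).
Proof. by apply: big_ind => //; [apply: ideal_gen0 | apply: ideal_genD]. Qed.

Lemma mem_ideal_gen g : G g -> ideal_gen G g.
Proof.
by move=> Gg; exists [:: (1, g)]; rewrite big_seq1 mul1r; split=> // c /[!inE] /eqP ->.
Qed.

End IdealGen.

Lemma mcoeff_mulX_eq0 (R : nzRingType) (N : nat) (p : {mpoly R[N]})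
    (m m' : 'X_{1..N}) i :
  (m' i < m i)%N -> (p * 'X_[m])@_m' = 0.
Proof.
move=> lt_m'm; apply: memN_msupp_eq0; rewrite (perm_mem (msuppMX p m)).
by apply/mapP => -[m'' _ def_m']; move: lt_m'm; rewrite def_m' mnmDE ltnNge leq_addr.
Qed.

Section Isolation.
Variables (m n : nat) (A : 'M[bool]_(m, n)).
Local Notation iota := (isolation_number A).

Lemma isolated_set_pair (S : {set ones A}) :
  isolated_set S -> {in S &, forall p q, p != q -> isolated_pair p q}.
Proof.
case/orP => [/cards1P [x ->] p q|/forallP iS p q pS qS neq_pq].
  by rewrite !inE => /eqP -> /eqP ->; rewrite eqxx.
by move: (iS p); rewrite pS => /forallP /(_ q); rewrite qS neq_pq.
Qed.

Lemma isolated_setS (S S' : {set ones A}) :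
  S' \subset S -> isolated_set S -> isolated_set S'.
Proof.
move=> sS'S iS; apply/orP; right; apply/forallP => p; apply/implyP => pS'.
apply/forallP => q; apply/implyP => qS'; apply/implyP.
by apply: (isolated_set_pair iS); apply: (subsetP sS'S).
Qed.

Lemma isolated_set0 : isolated_set (set0 : {set ones A}).
Proof. by apply/orP; right; apply/forallP => p; rewrite in_set0. Qed.

Lemma isolated_set_card_le (S : {set ones A}) : isolated_set S -> (#|S| <= iota)%N.
Proof. exact: (@leq_bigmax_cond _ (@isolated_set _ _ A) (fun S => #|S|)). Qed.

Lemma isolated_set_card_eq : exists2 S : {set ones A}, isolated_set S & #|S| = iota.
Proof.
have [|S iS maxS] := @eq_bigmax_cond _ (@isolated_set _ _ A) (fun S => #|S|).
  by apply/card_gt0P; exists set0; apply: isolated_set0.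
by exists S; rewrite // /isolation_number maxS.
Qed.

Lemma isolated_set_card_le_fun (T : finType) (f : ones A -> T) (S : {set ones A}) :
  isolated_set S -> {in S &, forall p q, f p = f q -> ~~ isolated_pair p q} ->
  (#|S| <= #|T|)%N.
Proof.
move=> iS f_not_iso; rewrite -(@card_in_imset _ _ f); first exact: max_card.
move=> p q pS qS fpq; apply: contraTeq (f_not_iso p q pS qS fpq).
by move/(isolated_set_pair iS pS qS) ->.
Qed.

Lemma isolation_number_le_ncols : (iota <= n)%N.
Proof.
apply/bigmax_leqP => S iS.
have col_not_iso : {in S &, forall p q, (val p).2 = (val q).2 -> ~~ isolated_pair p q}.
  move=> p q _ _ eq_col; have := valP p; have := valP q.
  by rewrite /isolated_pair negbK /= eq_col => -> ->.
by have := isolated_set_card_le_fun iS col_not_iso; rewrite card_ord.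
Qed.

Section Factorization.
Variables (r : nat) (V : 'M[bool]_(m, r)) (H : 'M[bool]_(r, n)).
Hypothesis VHA : bool_prod V H = A.

Lemma bool_prodE i j : A i j = [exists l, V i l && H l j].
Proof. by rewrite -VHA mxE. Qed.

Lemma ones_factor (p : ones A) : exists l, V (val p).1 l && H l (val p).2.
Proof. by apply/existsP; rewrite -bool_prodE; exact: (valP p). Qed.

Definition factor_index (p : ones A) : 'I_r := xchoose (ones_factor p).

Lemma factor_index_not_isolated p q :
  factor_index p = factor_index q -> ~~ isolated_pair p q.
Proof.
move=> eq_pq; have /andP [Vp Hp] := xchooseP (ones_factor p).
have /andP [Vq Hq] := xchooseP (ones_factor q).
rewrite -/(factor_index p) -/(factor_index q) eq_pq in Vp Hp *.
rewrite /isolated_pair negbK !bool_prodE.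
by apply/andP; split; apply/existsP; exists (factor_index q); apply/andP.
Qed.

Lemma isolation_number_le_factor : (iota <= r)%N.
Proof.
apply/bigmax_leqP => S iS.
have := isolated_set_card_le_fun iS (in2W factor_index_not_isolated).
by rewrite card_ord.
Qed.

End Factorization.

Lemma isolation_number_le_brank : (iota <= brank A)%N.
Proof.
apply: (big_ind (fun x => iota <= x)%N) => [|x y|r /existsP [V /existsP [H /eqP VHA]]].
- exact: isolation_number_le_ncols.
- by rewrite leq_min => -> ->.
- exact: isolation_number_le_factor VHA.
Qed.

End Isolation.

Section IsolationIdeal.
Variables (k : fieldType) (m n : nat) (A : 'M[bool]_(m, n)).
Local Notation iota := (isolation_number A).
Local Notation J := (@J_A k m n A).

Definition mnm_of_set (S : {set ones A}) : 'X_{1..nvar A} :=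
  [multinom (enum_val i \in S : nat) | i < nvar A].

Lemma mnm_of_setE (S : {set ones A}) v : mnm_of_set S (enum_rank v) = (v \in S).
Proof. by rewrite mnmE enum_rankK. Qed.

Lemma prod_xv (S : {set ones A}) : \prod_(v in S) xv k v = 'X_[mnm_of_set S].
Proof.
rewrite mpolyXE_id (reindex (@enum_rank (ones A))) /=; last first.
  by apply: onW_bij; apply: enum_rank_bij.
by rewrite big_mkcond; apply: eq_bigr => v _; rewrite mnm_of_setE; case: (v \in S).
Qed.

Lemma mdeg_mnm_of_set (S : {set ones A}) : mdeg (mnm_of_set S) = #|S|.
Proof.
rewrite mdegE (reindex (@enum_rank (ones A))) /=; last first.
  by apply: onW_bij; apply: enum_rank_bij.
rewrite -sum1_card [in RHS]big_mkcond; apply: eq_bigr => v _.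
by rewrite mnm_of_setE; case: (v \in S).
Qed.

Lemma xv_sqr (v : ones A) : xv k v ^+ 2 = 'X_[U_(enum_rank v) + U_(enum_rank v)].
Proof. by rewrite expr2 mpolyXD. Qed.

Lemma J_A_mcoeff_face (S : {set ones A}) (p : kA k A) :
  isolated_set S -> J p -> p@_(mnm_of_set S) = 0.
Proof.
move=> iS [s [Js ->]]; rewrite raddf_sum big1_seq // => c /Js [[S' [nfS' ->]]|[v ->]].
- have /subsetPn [v vS' vS] : ~~ (S' \subset S).
    by apply: contra nfS' => sS'S; apply: isolated_setS iS.
  rewrite prod_xv; apply: (@mcoeff_mulX_eq0 _ _ _ _ _ (enum_rank v)).
  by rewrite !mnm_of_setE vS' (negbTE vS).
- rewrite xv_sqr; apply: (@mcoeff_mulX_eq0 _ _ _ _ _ (enum_rank v)).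
  by rewrite mnm_of_setE mnmDE mnm1E eqxx; case: (v \in S).
Qed.

Lemma mpolyX_nonface_in_J_A (S : {set ones A}) :
  ~~ isolated_set S -> J 'X_[mnm_of_set S].
Proof. by move=> nfS; apply: mem_ideal_gen; left; exists S; rewrite prod_xv. Qed.

Lemma mpolyX_nonsquarefree_in_J_A (mm : 'X_{1..nvar A}) i :
  (1 < mm i)%N -> J 'X_[mm].
Proof.
move=> sq_i; have le_sq : (U_(i) + U_(i) <= mm)%MM.
  by apply/mnm_lepP => j; rewrite mnmDE mnm1E; case: eqP => [<-|].
rewrite -(submK le_sq) mpolyXD; apply: ideal_genMl; apply: mem_ideal_gen.
by right; exists (enum_val i); rewrite xv_sqr enum_valK.
Qed.

Lemma mpolyX_in_J_A (mm : 'X_{1..nvar A}) : (iota < mdeg mm)%N -> J 'X_[mm].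
Proof.
move=> deg_mm; have [i sq_i|squarefree] := pickP (fun i => 1 < mm i)%N.
  exact: mpolyX_nonsquarefree_in_J_A sq_i.
pose S := [set v | mm (enum_rank v) != 0%N].
have def_mm : mm = mnm_of_set S.
  apply/mnmP => j; rewrite mnmE inE enum_valK.
  by move: (squarefree j); case: (mm j) => [|[|]].
rewrite def_mm; apply: mpolyX_nonface_in_J_A; apply: contraTN deg_mm.
by move/isolated_set_card_le; rewrite def_mm mdeg_mnm_of_set -leqNgt.
Qed.

Lemma homog_in_J_A (p : kA k A) e : p \is e.-homog -> (iota < e)%N -> J p.
Proof.
move=> /dhomogP homp lt_iota_e; rewrite (mpolyE p) big_seq.
apply: ideal_gen_sum => mm supp_mm.
by rewrite -mul_mpolyC; apply: ideal_genMl; apply: mpolyX_in_J_A; rewrite homp.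
Qed.

Lemma kdiff_setT (z : chain k A) : kdiff z setT = 0.
Proof. by rewrite ffunE big_pred0 // => t; rewrite in_setT. Qed.

Lemma kdiff0 U : kdiff [ffun=> 0 : kA k A] U = 0.
Proof. by rewrite ffunE big1 // => t _; rewrite ffunE mulr0. Qed.

Lemma betti_nz_le i e : betti_nz k A i e -> (e <= iota)%N.
Proof.
case=> z [homz _ _ not_bd]; rewrite leqNgt; apply/negP => lt_iota_e; apply: not_bd.
exists [ffun=> 0] => T cardT.
by rewrite kdiff0 subr0; apply: homog_in_J_A (homz T cardT) lt_iota_e.
Qed.

Lemma betti_nz_top : betti_nz k A (nvar A) iota.
Proof.
have [S iS cardS] := isolated_set_card_eq A.
exists [ffun T => if T == setT then 'X_[mnm_of_set S] else 0]; split.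
- move=> T _; rewrite ffunE; case: eqP => _; last exact: dhomog0.
  by rewrite dhomogX /= mdeg_mnm_of_set cardS.
- move=> T cardT; rewrite ffunE; case: eqP => // defT.
  by rewrite defT cardsT card_ord in cardT.
- move=> U; rewrite ffunE; apply: ideal_gen_sum => t _; rewrite ffunE.
  case: eqP => _; last by rewrite mulr0; apply: ideal_gen0.
  rewrite -mulrA; apply: ideal_genMl; rewrite -mpolyXD; apply: mpolyX_in_J_A.
  by rewrite mdegD mdeg1 mdeg_mnm_of_set cardS.
- case=> w /(_ setT); rewrite cardsT card_ord ffunE eqxx kdiff_setT subr0.
  move=> /(_ erefl) /(J_A_mcoeff_face iS) /eqP.
  by rewrite mcoeffX eqxx oner_eq0.
Qed.

End IsolationIdeal.

Theorem theorem4p17 (k : fieldType) (m n : nat) (A : 'M[bool]_(m, n)) :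
  [/\ reg_S_eq k A (isolation_number A),
      (isolation_number A)%:Z = dim_Delta A + 1
    & (isolation_number A <= brank A)%N].
Proof.
split.
- by split; [exists (nvar A); apply: betti_nz_top | apply: betti_nz_le].
- by rewrite /dim_Delta subrK.
- exact: isolation_number_le_brank.
Qed.
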